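(* Let $g$ be a bounded generalized spatial sign, $1\le m<d$, and fix a dataset $S=(x_1,\dots,x_n)\in(\mathbb{R}^d)^n$. Then \[ \mathrm{bp}(\mathcal{V}_m^g;S)\ge\frac{\hat\phi_{g,m}-\hat\phi_{g,m+1}}{8\|g\|_\infty^2}, \] where $\hat\phi_{g,i}$ is the $i$-th largest eigenvalue of $\widehat K_g(S)$.
   Context: A bounded generalized spatial sign is $g(t)=\xi(\|t\|_2)t/\|t\|_2$ with $\xi:(0,\infty)\to(0,\infty)$ and $\|g\|_\infty:=\sup_t\|g(t)\|_2<\infty$. For a dataset $S=(x_1,\dots,x_n)$, $\widehat K_g(S)=\frac{2}{n(n-1)}\sum_{i<j}g((x_j-x_i)/\sqrt2)g((x_j-x_i)/\sqrt2)^\top$, and $\mathcal{V}_m^g(S)$ is the column space of the $d\times m$ matrix of orthonormal eigenvectors of $\widehat K_g(S)$ for its $m$ largest eigenvalues, an element of the Grassmannian $\mathrm{Gr}(d,m)$. For a map $\mathcal{V}:(\mathbb{R}^d)^n\to\mathrm{Gr}(d,m)$, the breakdown point at $S$ is \[ \mathrm{bp}(\mathcal{V};S)=\min_{1\le r\le n}\Big\{\frac rn:\sup_{S_{r/n}}\Theta(\mathcal{V}(S_{r/n}),\mathcal{V}(S))=\frac\pi2\Big\}, \] where the supremum is over all datasets $S_{r/n}=(x_1,\dots,x_{n-r},y_1,\dots,y_r)$ with arbitrary $y_1,\dots,y_r\in\mathbb{R}^d$, and $\Theta(\mathrm{col}(V_1),\mathrm{col}(V_2))=\arccos\varrho_m$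 is the largest principal angle, $\varrho_m$ being the smallest singular value of $V_1^\top V_2$ for orthonormal bases $V_1,V_2$. *)

From HB Require Import structures.
From mathcomp Require Import all_boot all_order all_algebra.
From mathcomp Require Import all_classical all_reals all_analysis.
Set Implicit Arguments. Unset Strict Implicit. Unset Printing Implicit Defensive.
Import Order.TTheory GRing.Theory Num.Theory.
Local Open Scope classical_set_scope.
Local Open Scope ring_scope.

Section Defs.
Variable R : realType.

Definition norm2 {d : nat} (t : 'cV[R]_d) : R := Num.sqrt (\sum_i t i 0 ^+ 2).

Definition gsign {d : nat} (xi : R -> R) (t : 'cV[R]_d) : 'cV[R]_d :=
  if t == 0 then 0 else (xi (norm2 t) / norm2 t) *: t.

Definition gsup (d : nat) (xi : R -> R) : R :=
  sup [set norm2 (gsign xi t) | t in [set: 'cV[R]_d]].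

Definition Khat {d n : nat} (xi : R -> R) (S : 'I_n -> 'cV[R]_d) : 'M[R]_d :=
  (2 / (n%:R * (n%:R - 1))) *:
    \sum_(i < n) \sum_(j < n | (i < j)%N)
      (let u := (Num.sqrt 2)^-1 *: (S j - S i) in gsign xi u *m (gsign xi u)^T).

(* orthonormal eigendecomposition K = U diag(lam_0,...,lam_{d-1}) U^T with
   lam_0 >= lam_1 >= ... >= lam_{d-1}; lam (i-1) is the i-th largest eigenvalue *)
Definition spectral_decomp {d : nat} (K : 'M[R]_d) (U : 'M[R]_d) (lam : nat -> R) :=
  U^T *m U = 1%:M /\
  K = U *m diag_mx (\row_(i < d) lam i) *m U^T /\
  (forall i j : nat, (i <= j < d)%N -> lam j <= lam i).

(* the column space of V is the span of the eigenvectors of K for its m largest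
   eigenvalues (for some orthonormal eigenbasis) *)
Definition top_eigenspace {d m : nat} (K : 'M[R]_d) (V : 'M[R]_(d, m)) :=
  exists (U : 'M[R]_d) (lam : nat -> R), spectral_decomp K U lam /\
    (V^T == (U *m diag_mx (\row_(j < d) ((j < m)%N)%:R))^T)%MS.

Definition sigma_min {m : nat} (M : 'M[R]_m) : R :=
  Num.sqrt (inf [set a | eigenvalue (M^T *m M) a]).

(* largest principal angle between col(V1) and col(V2) (orthonormal bases) *)
Definition Theta {d m : nat} (V1 V2 : 'M[R]_(d, m)) : R :=
  acos (sigma_min (V1^T *m V2)).

Definition replaced {d n : nat} (S : 'I_n -> 'cV[R]_d) (r : nat)
  (Y : 'I_n -> 'cV[R]_d) : 'I_n -> 'cV[R]_d :=
  fun i => if (i < n - r)%N then S i else Y i.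

(* breakdown point; min over an empty set is +oo *)
Definition bp {d m n : nat} (V : ('I_n -> 'cV[R]_d) -> 'M[R]_(d, m))
  (S : 'I_n -> 'cV[R]_d) : \bar R :=
  ereal_inf [set ((r%:R / n%:R)%:E)%E | r in
    [set r : nat | (1 <= r <= n)%N /\
       sup [set Theta (V S') (V S) | S' in [set replaced S r Y | Y in [set: 'I_n -> 'cV[R]_d]]]
         = pi / 2]].

End Defs.

(* Replacing r of the n points changes only the pair terms that involve a replaced
   point, and each pair term g g^T contributes at most ||g||^2 |x|^2 to the quadratic
   form, so x^T K x moves by at most delta |x|^2 with delta = 2 r ||g||^2 / (n - 1).
   A Courant-Fischer comparison then moves every ordered eigenvalue by at most delta,
   and a Davis-Kahan argument bounds every squared singular value of V'^T V, i.e. every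
   squared cosine of a principal angle, from below by
   (phi_m - phi_(m+1) - 2 delta) / (phi_1 - phi_(m+1) + 2 delta).
   When r/n is below the claimed bound, 2 delta is below the eigengap, so the largest
   principal angle stays uniformly below pi/2 and breakdown needs more points. *)

From HB Require Import structures.
From mathcomp Require Import all_boot all_order all_algebra.
From mathcomp Require Import all_classical all_reals all_analysis.
From mathcomp Require Import complex.
From mathcomp Require Import ring lra zify.
Import Order.TTheory GRing.Theory Num.Theory.
Local Open Scope classical_set_scope.
Local Open Scope ring_scope.
Set Implicit Arguments. Unset Strict Implicit. Unset Printing Implicit Defensive.

Section DotProduct.
Variable R : realFieldType.

Definition dotv {d} (x y : 'cV[R]_d) : R := (x^T *m y) 0 0.
Definition qform {d} (K : 'M[R]_d) (x : 'cV[R]_d) : R := (x^T *m K *m x) 0 0.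

Lemma dotvE d (x y : 'cV[R]_d) : dotv x y = \sum_i x i 0 * y i 0.
Proof. by rewrite /dotv mxE; apply: eq_bigr => i _; rewrite mxE. Qed.

Lemma dotvC d (x y : 'cV[R]_d) : dotv x y = dotv y x.
Proof. by rewrite !dotvE; apply: eq_bigr => i _; rewrite mulrC. Qed.

Lemma dotvDr d (x y z : 'cV[R]_d) : dotv x (y + z) = dotv x y + dotv x z.
Proof. by rewrite /dotv mulmxDr mxE. Qed.

Lemma dotv_ge0 d (x : 'cV[R]_d) : 0 <= dotv x x.
Proof. by rewrite dotvE; apply: sumr_ge0 => i _; rewrite -expr2 sqr_ge0. Qed.

Lemma dotv_eq0 d (x : 'cV[R]_d) : (dotv x x == 0) = (x == 0).
Proof.
apply/idP/idP => [|/eqP->]; last by rewrite dotvE big1 // => i _; rewrite mxE mul0r.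
rewrite dotvE => /eqP /psumr_eq0P x0; apply/eqP/colP => i; rewrite mxE.
by apply/eqP; rewrite -sqrf_eq0 expr2 x0 // => j _; rewrite -expr2 sqr_ge0.
Qed.

Lemma dotv_gt0 d (x : 'cV[R]_d) : x != 0 -> 0 < dotv x x.
Proof. by move=> x0; rewrite lt_def dotv_eq0 x0 dotv_ge0. Qed.

Lemma dotv_mulmx d m (V : 'M[R]_(d, m)) x y : dotv (V *m x) y = dotv x (V^T *m y).
Proof. by rewrite /dotv trmx_mul mulmxA. Qed.

Lemma dotv_orthonormal d m (V : 'M[R]_(d, m)) x y :
  V^T *m V = 1%:M -> dotv (V *m x) (V *m y) = dotv x y.
Proof. by move=> VV; rewrite dotv_mulmx mulmxA VV mul1mx. Qed.

Lemma dotv_sqr_le d (x y : 'cV[R]_d) : dotv x y ^+ 2 <= dotv x x * dotv y y.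
Proof.
rewrite !dotvE.
have lagrange : \sum_i \sum_j (x i 0 * y j 0 - x j 0 * y i 0) ^+ 2 =
    \sum_i \sum_j (x i 0 * x i 0) * (y j 0 * y j 0)
  + \sum_i \sum_j (x j 0 * x j 0) * (y i 0 * y i 0)
  - 2 * \sum_i \sum_j (x i 0 * y i 0) * (x j 0 * y j 0).
  rewrite mulr_sumr -big_split -sumrB; apply: eq_bigr => i _.
  rewrite mulr_sumr -big_split -sumrB; apply: eq_bigr => j _ /=; ring.
have sym : \sum_i \sum_j (x j 0 * x j 0) * (y i 0 * y i 0) =
           \sum_i \sum_j (x i 0 * x i 0) * (y j 0 * y j 0) by rewrite exchange_big.
have : 0 <= \sum_i \sum_j (x i 0 * y j 0 - x j 0 * y i 0) ^+ 2.
  by apply: sumr_ge0 => i _; apply: sumr_ge0 => j _; apply: sqr_ge0.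
rewrite lagrange sym -!big_distrlr /= expr2; lra.
Qed.

Lemma dotv_trmx_orthonormal_le d m (V : 'M[R]_(d, m)) u :
  V^T *m V = 1%:M -> dotv (V^T *m u) (V^T *m u) <= dotv u u.
Proof.
move=> VV; set w := V^T *m u.
have [q uE Vwq] : exists2 q, u = V *m w + q & dotv (V *m w) q = 0.
  exists (u - V *m w); first by rewrite addrC subrK.
  by rewrite dotv_mulmx mulmxBr mulmxA VV mul1mx subrr /dotv mulmx0 mxE.
have -> : dotv u u = dotv w w + dotv q q.
  rewrite {1 2}uE dotvDr ![dotv (_ + q) _]dotvC !dotvDr dotv_orthonormal //.
  by rewrite [dotv q _]dotvC Vwq addr0 add0r.
by rewrite lerDl dotv_ge0.
Qed.

Lemma eigenvalue_gram p m (M : 'M[R]_(p, m)) a : eigenvalue (M^T *m M) a ->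
  exists2 x : 'cV[R]_m, x != 0 & a * dotv x x = dotv (M *m x) (M *m x).
Proof.
case/eigenvalueP => w Hw w0; exists w^T; first by rewrite trmx_eq0.
have := congr1 trmx Hw; rewrite trmx_mul linearZ /= [(_ *m _)^T]trmx_mul trmxK => Hx.
by rewrite dotv_mulmx mulmxA Hx /dotv -scalemxAr [RHS]mxE.
Qed.

Lemma qform_outer d (g x : 'cV[R]_d) : qform (g *m g^T) x = dotv g x ^+ 2.
Proof.
rewrite /qform mulmxA -(mulmxA (x^T *m g)) mxE big_ord1.
by rewrite -/(dotv x g) -/(dotv g x) dotvC expr2.
Qed.

Lemma qformD d (A B : 'M[R]_d) x : qform (A + B) x = qform A x + qform B x.
Proof. by rewrite /qform mulmxDr mulmxDl mxE. Qed.

Lemma qformZ d (A : 'M[R]_d) c x : qform (c *: A) x = c * qform A x.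
Proof. by rewrite /qform -scalemxAr -scalemxAl mxE. Qed.

Lemma qform_sum d (I : finType) (P : pred I) (F : I -> 'M[R]_d) x :
  qform (\sum_(i | P i) F i) x = \sum_(i | P i) qform (F i) x.
Proof.
apply: (big_morph (qform^~ x) (fun A B => qformD A B x)).
by rewrite /qform mulmx0 mul0mx mxE.
Qed.

Lemma pid_mx_mulE d r (c : 'cV[R]_d) i :
  (pid_mx r *m c) i 0 = if (i < r)%N then c i 0 else 0.
Proof.
rewrite mxE (bigD1 i) //= big1 => [|j /negbTE ji]; last first.
  by rewrite mxE (inj_eq val_inj) eq_sym ji mul0r.
by rewrite mxE eqxx /= addr0; case: ifP => _; rewrite ?mul1r ?mul0r.
Qed.

Lemma copid_mx_mulE d r (c : 'cV[R]_d) i :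
  (copid_mx r *m c) i 0 = if (i < r)%N then 0 else c i 0.
Proof.
rewrite /copid_mx mulmxBl mul1mx mxE [X in _ + X]mxE pid_mx_mulE.
by case: ifP; rewrite ?subrr ?subr0.
Qed.

End DotProduct.

Section SymmetricEigenvalue.
Variable R : rcfType.

Lemma complex_real_Re (z : R[i]) :
  z \is Num.real -> real_complex R (complex.Re z) = z.
Proof.
by case: z => a b; rewrite realE !lecE /= => /orP[/andP[/eqP-> _] | /andP[/eqP<- _]].
Qed.

Lemma eigenvalue_map_complex n (A : 'M[R]_n) a :
  eigenvalue (map_mx (real_complex R) A) (real_complex R a) = eigenvalue A a.
Proof. by rewrite !eigenvalue_root_char -map_char_poly fmorph_root. Qed.

(* Over R[i] the matrix is Hermitian, so the diagonal of its spectral decomposition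
   is real. *)
Lemma symmetricmx_eigenvalue n (A : 'M[R]_n.+1) :
  A^T = A -> exists a, eigenvalue A a.
Proof.
move=> symA; pose A' := map_mx (real_complex R) A.
have hermA' : A' \is hermsymmx.
  apply: realsym_hermsym.
    apply/is_hermitianmxP; rewrite expr0 scale1r; apply/matrixP => i j.
    by rewrite !mxE /A' -[in LHS]symA mxE.
  by apply/mxOverP => i j; rewrite mxE realE !lecE /= eqxx le_total.
have /orthomx_spectralP eA' := hermitian_normalmx hermA'.
set P := spectralmx A' in eA'; set D := spectral_diag A' in eA'.
have /mxOverP /(_ 0 0) realD := hermitian_spectral_diag_real hermA'.
exists (complex.Re (D 0 0)); rewrite -eigenvalue_map_complex complex_real_Re //.
apply/eigenvalueP; exists (row 0 P).
  have PA' : P *m A' = diag_mx D *m P.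
    by rewrite eA' !mulmxA mulmxV ?mul1mx ?spectral_unit.
  by rewrite -row_mul PA' row_mul row_diag_mx -scalemxAl -rowE.
rewrite rowE (mulmx_free_eq0 (F := R[i])) ?row_free_unit ?spectral_unit //.
by apply/negP => /eqP/matrixP/(_ 0 0); rewrite !mxE eqxx => /eqP; rewrite oner_eq0.
Qed.

End SymmetricEigenvalue.

Section SpectralComparison.
Variable R : realType.

Lemma qform_spectral d (K U : 'M[R]_d) l (z : 'cV[R]_d) : spectral_decomp K U l ->
  qform K (U *m z) = \sum_(i < d) l i * z i 0 ^+ 2.
Proof.
case=> UU [-> _]; rewrite /qform trmx_mul !mulmxA -[z^T *m U^T *m U]mulmxA UU mulmx1.
rewrite -[_ *m U^T *m U]mulmxA UU mulmx1 mul_mx_diag mxE; apply: eq_bigr => i _.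
by rewrite !mxE expr2 mulrCA mulrA.
Qed.

Lemma dotv_spectral d (U : 'M[R]_d) (z : 'cV[R]_d) :
  U^T *m U = 1%:M -> dotv (U *m z) (U *m z) = \sum_(i < d) z i 0 ^+ 2.
Proof. by move=> UU; rewrite dotv_orthonormal // dotvE; under eq_bigr do rewrite -expr2. Qed.

Lemma qform_spectral_pid_ge d (K U : 'M[R]_d) l r (z : 'cV[R]_d) :
  spectral_decomp K U l -> (r <= d)%N ->
  l r.-1 * dotv (U *m (pid_mx r *m z)) (U *m (pid_mx r *m z)) <=
    qform K (U *m (pid_mx r *m z)).
Proof.
move=> sd rd; have [UU [_ l_sorted]] := sd.
rewrite dotv_spectral // (qform_spectral _ sd) mulr_sumr; apply: ler_sum => i _.
rewrite pid_mx_mulE; case: ifP => ir; last by rewrite expr0n /= !mulr0.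
by apply: ler_wpM2r; [exact: sqr_ge0 | apply: l_sorted; lia].
Qed.

Lemma qform_spectral_copid_le d (K U : 'M[R]_d) l k (z : 'cV[R]_d) :
  spectral_decomp K U l ->
  qform K (U *m (copid_mx k *m z)) <=
    l k * dotv (U *m (copid_mx k *m z)) (U *m (copid_mx k *m z)).
Proof.
move=> sd; have [UU [_ l_sorted]] := sd.
rewrite dotv_spectral // (qform_spectral _ sd) mulr_sumr; apply: ler_sum => i _.
rewrite copid_mx_mulE; case: ifP => ik; first by rewrite expr0n /= !mulr0.
by apply: ler_wpM2r; [exact: sqr_ge0 | apply: l_sorted; have := ltn_ord i; lia].
Qed.

(* Dimension count: the span of the first k+1 columns of U1 and that of the last
   d-k columns of U2 meet nontrivially. *)
Lemma pid_copid_span_meet d k (U1 U2 : 'M[R]_d) :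
  U1 \in unitmx -> U2 \in unitmx -> (k < d)%N ->
  exists z1 z2 : 'cV[R]_d, U1 *m (pid_mx k.+1 *m z1) != 0 /\
    U1 *m (pid_mx k.+1 *m z1) = U2 *m (copid_mx k *m z2).
Proof.
move=> U1u U2u kd.
pose A1 : 'M[R]_d := pid_mx k.+1 *m U1^T; pose A2 : 'M[R]_d := copid_mx k *m U2^T.
have rA1 : \rank A1 = k.+1 by rewrite mxrankMfree ?row_free_unit ?unitmx_tr ?rank_pid_mx.
have rA2 : \rank A2 = (d - k)%N.
  by rewrite mxrankMfree ?row_free_unit ?unitmx_tr // rank_copid_mx // ltnW.
have capA : (A1 :&: A2)%MS != 0.
  have := mxrank_sum_cap A1 A2; have := rank_leq_col (A1 + A2)%MS.
  by rewrite -mxrank_eq0 rA1 rA2; lia.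
have [c1 e1] := submxP (submx_trans (nz_row_sub (A1 :&: A2)%MS) (capmxSl A1 A2)).
have [c2 e2] := submxP (submx_trans (nz_row_sub (A1 :&: A2)%MS) (capmxSr A1 A2)).
have x1 : U1 *m (pid_mx k.+1 *m c1^T) = (nz_row (A1 :&: A2)%MS)^T.
  by rewrite e1 !trmx_mul trmxK tr_pid_mx mulmxA.
have x2 : U2 *m (copid_mx k *m c2^T) = (nz_row (A1 :&: A2)%MS)^T.
  by rewrite e2 !trmx_mul trmxK /copid_mx linearB /= trmx1 tr_pid_mx mulmxA.
by exists c1^T, c2^T; rewrite x1 x2 trmx_eq0 nz_row_eq0.
Qed.

Lemma spectral_eigenvalue_le d (K1 K2 U1 U2 : 'M[R]_d) (l1 l2 : nat -> R) del k :
  spectral_decomp K1 U1 l1 -> spectral_decomp K2 U2 l2 ->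
  (forall x, qform K1 x <= qform K2 x + del * dotv x x) -> (k < d)%N ->
  l1 k <= l2 k + del.
Proof.
move=> sd1 sd2 K12 kd.
have U1u : U1 \in unitmx by have [/mulmx1_unit[]] := sd1.
have U2u : U2 \in unitmx by have [/mulmx1_unit[]] := sd2.
have [z1 [z2 [x0 x2]]] := pid_copid_span_meet U1u U2u kd.
move: x0 x2 (qform_spectral_pid_ge z1 sd1 kd); set x := U1 *m _ => x0 x2 q1.
have q2 := qform_spectral_copid_le k z2 sd2; rewrite -x2 in q2.
rewrite -(ler_pM2r (dotv_gt0 x0)) mulrDl; have := K12 x; lra.
Qed.

Lemma diag_mx_lt_pid d m : diag_mx (\row_(j < d) ((j < m)%N)%:R) = pid_mx m :> 'M[R]_d.
Proof.
apply/matrixP => i j; rewrite !mxE; case: (eqVneq i j) => [->|ne].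
  by rewrite eqxx andTb mulr1n.
by rewrite mulr0n (inj_eq val_inj) (negbTE ne).
Qed.

Lemma top_eigenspace_projector d m (K : 'M[R]_d) (V : 'M[R]_(d, m)) :
  (m <= d)%N -> V^T *m V = 1%:M -> top_eigenspace K V ->
  exists U l, spectral_decomp K U l /\ V *m V^T = U *m pid_mx m *m U^T.
Proof.
move=> md VV [U [l [sd]]]; rewrite diag_mx_lt_pid => /andP[VE EV].
exists U, l; split => //; have [UU _] := sd.
move: VE EV; set E := (U *m pid_mx m)^T => VE EV.
have ET : E^T = U *m pid_mx m by rewrite trmxK.
have EEE : E *m E^T *m E = E.
  by rewrite ET /E trmx_mul tr_pid_mx !mulmxA -(mulmxA _ U^T U) UU mulmx1 !pid_mx_id.
have [A eA] := submxP VE; have [B eB] := submxP EV.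
have VP : V^T *m (E^T *m E) = V^T by rewrite eA -mulmxA (mulmxA E) EEE.
have PV : V *m V^T *m (E^T *m E) = E^T *m E.
  by rewrite eB trmx_mul trmxK !mulmxA -(mulmxA V V^T V) VV mulmx1.
have -> : U *m pid_mx m *m U^T = E^T *m E.
  by rewrite ET /E trmx_mul tr_pid_mx !mulmxA -[U *m _ *m pid_mx m]mulmxA pid_mx_id.
by rewrite -mulmxA VP in PV.
Qed.

Lemma qform_top_projector_ge d m (K U : 'M[R]_d) l (V : 'M[R]_(d, m)) x :
  spectral_decomp K U l -> (m <= d)%N -> V^T *m V = 1%:M ->
  V *m V^T = U *m pid_mx m *m U^T ->
  l m.-1 * dotv (V *m x) (V *m x) <= qform K (V *m x).
Proof.
move=> sd md VV VVU.
have -> : V *m x = U *m (pid_mx m *m (U^T *m (V *m x))).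
  by rewrite !mulmxA -VVU -!mulmxA (mulmxA V^T) VV mul1mx.
exact: qform_spectral_pid_ge.
Qed.

Lemma qform_le_top_projector d m (K U : 'M[R]_d) l (V : 'M[R]_(d, m)) u :
  spectral_decomp K U l -> V *m V^T = U *m pid_mx m *m U^T ->
  qform K u <= l m * dotv u u + (l 0%N - l m) * dotv (V^T *m u) (V^T *m u).
Proof.
move=> sd VVU; have [UU [_ l_sorted]] := sd.
have [y uE] : exists y, u = U *m y by exists (U^T *m u); rewrite mulmxA mulmx1C // mul1mx.
have -> : dotv (V^T *m u) (V^T *m u) = \sum_(i < d | (i < m)%N) y i 0 ^+ 2.
  rewrite -dotv_mulmx mulmxA VVU uE -!mulmxA (mulmxA U^T) UU mul1mx.
  rewrite dotv_orthonormal // dotvE [RHS]big_mkcond /=; apply: eq_bigr => i _.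
  by rewrite pid_mx_mulE; case: ifP; rewrite ?mul0r // expr2.
rewrite uE dotv_spectral // (qform_spectral _ sd) !mulr_sumr.
rewrite [X in _ + X]big_mkcond /= -big_split.
apply: ler_sum => i _ /=; have := sqr_ge0 (y i 0); case: ifP => im.
  have : l i <= l 0%N by apply: l_sorted; have := ltn_ord i; lia.
  nra.
have : l i <= l m by apply: l_sorted; have := ltn_ord i; lia.
nra.
Qed.

Lemma top_eigenspaces_overlap_ge d m (K K' U : 'M[R]_d) l (V V' : 'M[R]_(d, m)) del x :
  (0 < m)%N -> (m < d)%N -> spectral_decomp K U l ->
  V^T *m V = 1%:M -> top_eigenspace K V ->
  V'^T *m V' = 1%:M -> top_eigenspace K' V' ->
  (forall x, `|qform K' x - qform K x| <= del * dotv x x) ->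
  (l m.-1 - l m - 2 * del) * dotv (V *m x) (V *m x) <=
    (l 0%N - l m + 2 * del) * dotv (V'^T *m (V *m x)) (V'^T *m (V *m x)).
Proof.
move=> m0 md sd VV tV VV' tV' Kdel.
have [U0 [l0 [sd0 VVU0]]] := top_eigenspace_projector (ltnW md) VV tV.
have [U1 [l1 [sd1 VVU1]]] := top_eigenspace_projector (ltnW md) VV' tV'.
have K'K y : qform K' y <= qform K y + del * dotv y y.
  by have := ler_normlW (Kdel y); lra.
have KK' y : qform K y <= qform K' y + del * dotv y y.
  by have := Kdel y; rewrite distrC => /ler_normlW; lra.
have l_l0 : l m.-1 <= l0 m.-1.
  rewrite -[l0 _]addr0; apply: (spectral_eigenvalue_le sd sd0) => [y|]; last by lia.
  by rewrite mul0r addr0.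
have l1m : l1 m <= l m + del := spectral_eigenvalue_le sd1 sd K'K md.
have l10 : l1 0%N <= l 0%N + del by apply: spectral_eigenvalue_le sd1 sd K'K _; lia.
have lm : l m <= l1 m + del := spectral_eigenvalue_le sd sd1 KK' md.
have lK := qform_top_projector_ge x sd0 (ltnW md) VV VVU0.
have K'u := qform_le_top_projector (V *m x) sd1 VVU1.
move: (V *m x) lK K'u (KK' (V *m x)) => u lK K'u KK'u.
have N0 := dotv_ge0 u; have s0 := dotv_ge0 (V'^T *m u).
have : l m.-1 * dotv u u <= l0 m.-1 * dotv u u by rewrite ler_wpM2r.
have : l1 m * dotv u u <= (l m + del) * dotv u u by rewrite ler_wpM2r.
have : (l1 0%N - l1 m) * dotv (V'^T *m u) (V'^T *m u) <=
    (l 0%N - l m + 2 * del) * dotv (V'^T *m u) (V'^T *m u) by rewrite ler_wpM2r //; lra.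
lra.
Qed.

Lemma overlap_eigenvalue_bounds d m (K K' U : 'M[R]_d) l (V V' : 'M[R]_(d, m)) del a :
  (0 < m)%N -> (m < d)%N -> spectral_decomp K U l ->
  V^T *m V = 1%:M -> top_eigenspace K V ->
  V'^T *m V' = 1%:M -> top_eigenspace K' V' ->
  (forall x, `|qform K' x - qform K x| <= del * dotv x x) ->
  eigenvalue ((V'^T *m V)^T *m (V'^T *m V)) a ->
  (l m.-1 - l m - 2 * del) / (l 0%N - l m + 2 * del) <= a <= 1.
Proof.
move=> m0 md sd VV tV VV' tV' Kdel /eigenvalue_gram [x x0].
have key := top_eigenspaces_overlap_ge x m0 md sd VV tV VV' tV' Kdel.
have sN := dotv_trmx_orthonormal_le (V *m x) VV'.
have N0 := dotv_gt0 x0.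
have del0 : 0 <= del.
  by have := le_trans (normr_ge0 _) (Kdel (V *m x)); rewrite dotv_orthonormal // pmulr_lge0.
rewrite -mulmxA => aN; rewrite (dotv_orthonormal x x VV) -aN in key sN.
have a0 : 0 <= a by rewrite -(pmulr_lge0 _ N0) aN dotv_ge0.
apply/andP; split; last by rewrite -(ler_pM2r N0) mul1r.
have [_ [_ l_sorted]] := sd; have l0m : l m <= l 0%N by apply: l_sorted; lia.
have [D0|D_gt0] := eqVneq (l 0%N - l m + 2 * del) 0; first by rewrite D0 invr0 mulr0.
rewrite ler_pdivrMr; last by rewrite lt_def D_gt0; lra.
by rewrite -(ler_pM2r N0) [a * _]mulrC -mulrA.
Qed.

End SpectralComparison.

Section KhatPerturbation.
Variable R : realType.

Lemma norm2_sqr d (g : 'cV[R]_d) : norm2 g ^+ 2 = dotv g g.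
Proof.
rewrite /norm2 sqr_sqrtr ?dotvE; last by apply: sumr_ge0 => i _; apply: sqr_ge0.
by apply: eq_bigr => i _; rewrite expr2.
Qed.

Lemma dotv_sqr_le_norm2 d (g x : 'cV[R]_d) G :
  norm2 g <= G -> dotv g x ^+ 2 <= G ^+ 2 * dotv x x.
Proof.
move=> gG; apply: le_trans (dotv_sqr_le g x) _; apply: ler_wpM2r; first exact: dotv_ge0.
by rewrite -norm2_sqr lerXn2r ?nnegrE ?sqrtr_ge0 //; apply: le_trans gG; rewrite sqrtr_ge0.
Qed.

Lemma dotv_sqr_dist_le d (g h x : 'cV[R]_d) G :
  norm2 g <= G -> norm2 h <= G -> `|dotv g x ^+ 2 - dotv h x ^+ 2| <= G ^+ 2 * dotv x x.
Proof.
move=> /(dotv_sqr_le_norm2 x) gG /(dotv_sqr_le_norm2 x) hG.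
by rewrite ler_norml; have := sqr_ge0 (dotv g x); have := sqr_ge0 (dotv h x); lra.
Qed.

Lemma gsign_le_gsup d (xi : R -> R) (t : 'cV[R]_d) :
  has_ubound [set norm2 (gsign xi t) | t in [set: 'cV[R]_d]] ->
  norm2 (gsign xi t) <= gsup d xi.
Proof.
move=> ub; apply: sup_upper_bound; last by exists t.
by split => //; exists (norm2 (gsign xi t)), t.
Qed.

Definition pair_sign d n (xi : R -> R) (T : 'I_n -> 'cV[R]_d) (i j : 'I_n) :=
  gsign xi ((Num.sqrt 2)^-1 *: (T j - T i)).

Lemma qform_Khat d n xi (T : 'I_n -> 'cV[R]_d) x :
  qform (Khat xi T) x = 2 / (n%:R * (n%:R - 1)) *
    \sum_(i < n) \sum_(j < n | (i < j)%N) dotv (pair_sign xi T i j) x ^+ 2.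
Proof.
rewrite /Khat qformZ qform_sum; congr (_ * _); apply: eq_bigr => i _.
by rewrite qform_sum; apply: eq_bigr => j _; rewrite qform_outer.
Qed.

Lemma sum_ord_geq_const n k (b : R) : (k <= n)%N ->
  \sum_(j < n | (n - k <= j)%N) b = b *+ k.
Proof. by move=> kn; rewrite -{2}(subKn kn) -sumr_const_nat big_geq_mkord. Qed.

Lemma Khat_weight_ge0 n : 0 <= 2 / (n%:R * (n%:R - 1)) :> R.
Proof.
apply: divr_ge0 => //; case: n => [|n]; first by rewrite mul0r.
by apply: mulr_ge0 => //; rewrite -natr1 addrK.
Qed.

Definition Khat_perturbation n r G : R := 2 / (n%:R * (n%:R - 1)) * ((n * r)%:R * G ^+ 2).

Lemma Khat_perturbation_ge0 n r G : 0 <= Khat_perturbation n r G.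
Proof. by apply: mulr_ge0; [exact: Khat_weight_ge0 | apply: mulr_ge0; rewrite ?sqr_ge0]. Qed.

Lemma qform_Khat_replaced d n xi (S Y : 'I_n -> 'cV[R]_d) r G x :
  (r <= n)%N -> (forall t : 'cV[R]_d, norm2 (gsign xi t) <= G) ->
  `|qform (Khat xi (replaced S r Y)) x - qform (Khat xi S) x| <=
    Khat_perturbation n r G * dotv x x.
Proof.
move=> rn gG; set B := G ^+ 2 * dotv x x.
have term (i j : 'I_n) : (i < j)%N ->
    `|dotv (pair_sign xi (replaced S r Y) i j) x ^+ 2 - dotv (pair_sign xi S i j) x ^+ 2|
      <= if (n - r <= j)%N then B else 0.
  move=> ij; case: ifP => jr; first by apply: dotv_sqr_dist_le; apply: gG.
  move/negbT: jr; rewrite -ltnNge => jr.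
  by rewrite /pair_sign /replaced jr (ltn_trans ij jr) subrr normr0.
have -> : Khat_perturbation n r G * dotv x x =
    2 / (n%:R * (n%:R - 1)) * ((n * r)%:R * B) by rewrite /Khat_perturbation /B !mulrA.
rewrite !qform_Khat -mulrBr normrM ger0_norm ?Khat_weight_ge0 // ler_wpM2l ?Khat_weight_ge0 //.
have -> : (n * r)%:R * B = \sum_(i < n) \sum_(j < n | (n - r <= j)%N) B.
  by rewrite sumr_const card_ord sum_ord_geq_const // -mulrnA mulr_natl mulnC.
rewrite -sumrB; apply: le_trans (ler_norm_sum _ _ _) _; apply: ler_sum => i _.
rewrite -sumrB; apply: le_trans (ler_norm_sum _ _ _) _.
apply: le_trans (ler_sum _ (fun j ij => term i j ij)) _.
rewrite [X in _ <= X]big_mkcond [X in _ <= X](bigID (fun j : 'I_n => (i < j)%N)) /=.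
by rewrite lerDl sumr_ge0 // => j _; case: ifP => // _; rewrite mulr_ge0 ?sqr_ge0 ?dotv_ge0.
Qed.

Lemma Khat_perturbation_lt n r G gap : (0 < n)%N ->
  r%:R / n%:R < gap / (8 * G ^+ 2) -> 2 * Khat_perturbation n r G < gap.
Proof.
move=> n0 hlt; have rn0 : 0 <= r%:R / n%:R :> R by apply: divr_ge0.
have G2 : 0 < 8 * G ^+ 2.
  rewrite lt_def mulr_ge0 ?sqr_ge0 // andbT; apply/negP => /eqP G0.
  by move: hlt; rewrite G0 invr0 mulr0; lra.
have gap0 : 0 < gap.
  have : 0 < gap / (8 * G ^+ 2) by lra.
  by rewrite pmulr_lgt0 ?invr_gt0.
have nR : 0 < n%:R :> R by rewrite ltr0n.
have key : r%:R * (8 * G ^+ 2) < gap * n%:R.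
  by move: hlt; rewrite ltr_pdivlMr // mulrAC ltr_pdivrMr.
have [->|n1] := eqVneq n 1%N.
  by rewrite /Khat_perturbation subrr mulr0 invr0 mulr0 mul0r mulr0.
have nR2 : 2 <= n%:R :> R by rewrite (ler_nat R 2); lia.
have nn1 : 0 < n%:R * (n%:R - 1) :> R by apply: mulr_gt0 => //; lra.
have -> : 2 * Khat_perturbation n r G = 4 * n%:R * (r%:R * G ^+ 2) / (n%:R * (n%:R - 1)).
  by rewrite /Khat_perturbation natrM; field; lra.
rewrite ltr_pdivrMr //.
have : n%:R * (4 * (r%:R * G ^+ 2)) < n%:R * (gap * (n%:R - 1)).
  by rewrite ltr_pM2l //; nra.
lra.
Qed.

End KhatPerturbation.

Section PrincipalAngle.
Variable R : realType.

Lemma ltr_acos (x y : R) : -1 <= x -> x < y -> y <= 1 -> acos y < acos x.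
Proof.
move=> x_ge y_gt y_le.
have xI : x \in `[-1, 1] by rewrite in_itv /= x_ge (le_trans (ltW y_gt)).
have yI : y \in `[-1, 1] by rewrite in_itv /= y_le (le_trans x_ge (ltW y_gt)).
have acosI (z : R) : z \in `[-1, 1] -> acos z \in `[0, pi].
  by rewrite !in_itv /= => zI; rewrite acos_ge0 ?acos_lepi.
by rewrite -(ltr_cos (acosI y yI) (acosI x xI)) !acosK.
Qed.

Lemma ler_acos (x y : R) : -1 <= x -> x <= y -> y <= 1 -> acos y <= acos x.
Proof.
move=> x_ge; rewrite le_eqVlt => /orP[/eqP-> //| y_gt y_le].
exact/ltW/ltr_acos.
Qed.

Lemma sigma_min_bounds m (M : 'M[R]_m) c : (0 < m)%N -> 0 <= c ->
  (forall a, eigenvalue (M^T *m M) a -> c <= a <= 1) ->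
  Num.sqrt c <= sigma_min M <= 1.
Proof.
case: m M => // m M _ c0 Mc.
have [a0 Ea0] : exists a, eigenvalue (M^T *m M) a.
  by apply: symmetricmx_eigenvalue; rewrite trmx_mul trmxK.
have lb : lbound [set a | eigenvalue (M^T *m M) a] c by move=> a /Mc /andP[].
have inf_le1 : inf [set a | eigenvalue (M^T *m M) a] <= 1.
  apply: le_trans (ge_inf _ Ea0) _; first by exists c.
  by have /andP[] := Mc _ Ea0.
have c_le_inf : c <= inf [set a | eigenvalue (M^T *m M) a].
  by apply: lb_le_inf => //; exists a0.
by rewrite /sigma_min -sqrtr1 !ler_sqrt ?c_le_inf ?inf_le1 // (le_trans c0).
Qed.

Lemma Theta_lt_pi2 d m (V1 V2 : 'M[R]_(d, m)) c : (0 < m)%N -> 0 < c ->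
  (forall a, eigenvalue ((V1^T *m V2)^T *m (V1^T *m V2)) a -> c <= a <= 1) ->
  Theta V1 V2 <= acos (Num.sqrt c) < pi / 2.
Proof.
move=> m0 c0 /(sigma_min_bounds m0 (ltW c0)) /andP[c_le le1].
have sc0 : 0 < Num.sqrt c by rewrite sqrtr_gt0.
rewrite ler_acos ?(le_trans c_le) //=; last by rewrite (le_trans _ (ltW sc0)).
by rewrite -acos0 ltr_acos // (le_trans c_le).
Qed.

End PrincipalAngle.

Theorem theorem10 (R : realType) (d m n : nat) (xi : R -> R)
  (Vm : ('I_n -> 'cV[R]_d) -> 'M[R]_(d, m)) (S : 'I_n -> 'cV[R]_d) :
  (forall r : R, 0 < r -> 0 < xi r) ->
  has_ubound [set norm2 (gsign xi t) | t in [set: 'cV[R]_d]] ->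
  (1 <= m)%N -> (m < d)%N ->
  (forall T : 'I_n -> 'cV[R]_d,
      (Vm T)^T *m Vm T = 1%:M /\ top_eigenspace (Khat xi T) (Vm T)) ->
  forall (U : 'M[R]_d) (lam : nat -> R), spectral_decomp (Khat xi S) U lam ->
  (((lam (m - 1)%N - lam m) / (8 * gsup d xi ^+ 2))%:E <= bp Vm S)%E.
Proof.
move=> _ ub m_gt0 m_lt_d HV U lam sd.
apply: le_ereal_inf_tmp => _ [r [/andP[r_gt0 r_le_n] sup_pi2] <-].
rewrite lee_fin leNgt subn1; apply/negP => r_small.
set del := Khat_perturbation n r (gsup d xi).
have del_lt : 2 * del < lam m.-1 - lam m.
  exact: Khat_perturbation_lt (leq_trans r_gt0 r_le_n) r_small.
have del_ge0 : 0 <= del := Khat_perturbation_ge0 n r (gsup d xi).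
set c := (lam m.-1 - lam m - 2 * del) / (lam 0%N - lam m + 2 * del).
have c_gt0 : 0 < c.
  have [_ [_ lam_sorted]] := sd.
  have : lam m.-1 <= lam 0%N by apply: lam_sorted; lia.
  by move=> ?; apply: divr_gt0; lra.
have Theta_small Y : Theta (Vm (replaced S r Y)) (Vm S) <= acos (Num.sqrt c) < pi / 2.
  have [VV tV] := HV S; have [VV' tV'] := HV (replaced S r Y).
  apply: Theta_lt_pi2 c_gt0 _ => // a.
  apply: overlap_eigenvalue_bounds sd VV tV VV' tV' _ => // x.
  by apply: qform_Khat_replaced => // t; apply: gsign_le_gsup.
have : pi / 2 <= acos (Num.sqrt c).
  rewrite -sup_pi2; apply: ge_sup => [|_ [_ [Y _ <-] <-]]; last by case/andP: (Theta_small Y).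
  by exists (Theta (Vm (replaced S r S)) (Vm S)), (replaced S r S) => //; exists S.
by case/andP: (Theta_small S) => _; lra.
Qed.
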